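(* Let $p \geq 1$ and $a \geq 0$ be integers, and let $a_{\max}(p) = \lfloor \frac{p^2}{4} \rfloor$. Then: (i) If $a < p-1$, then $H_c(p,a) = 0$. (ii) If $a > a_{\max}(p)$, then $H(p,a) = 0$. Moreover, $$H(p, a_{\max}(p)) = \begin{cases} p, & \text{if } p \text{ is odd},\\ \frac{p}{2}, & \text{if } p \text{ is even}.\end{cases}$$ (iii) If $a_{\max}(p-1) < a \leq a_{\max}(p)$, then $H(p,a) = H_c(p,a)$.
   Context: For a finite poset, the Hasse diagram is the directed graph on its points whose arcs are the covering pairs $x \to y$ ($x < y$ with no $w$ satisfying $x < w < y$). Posets are counted up to isomorphism (unlabeled). $H(p,a)$ denotes the number of isomorphism classes of posets with $p$ points whose Hasse diagram has exactly $a$ arcs, and $H_c(p,a)$ denotes the number of those that are connected (i.e., whose Hasse diagram, viewed as an undirected graph, is connected). *)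

From mathcomp Require Import all_boot all_fingroup.
Set Implicit Arguments. Unset Strict Implicit. Unset Printing Implicit Defensive.

Definition prel (p : nat) := {ffun 'I_p * 'I_p -> bool}.

Definition is_porder (p : nat) (R : prel p) : bool :=
  [&& [forall x, R (x, x)],
      [forall x, forall y, (R (x, y) && R (y, x)) ==> (x == y)] &
      [forall x, forall y, forall z, (R (x, y) && R (y, z)) ==> R (x, z)]].

Definition covers (p : nat) (R : prel p) (x y : 'I_p) : bool :=
  [&& x != y, R (x, y) &
      ~~ [exists w, [&& w != x, w != y, R (x, w) & R (w, y)]]].

Definition narcs (p : nat) (R : prel p) : nat :=
  #|[set e : 'I_p * 'I_p | covers R e.1 e.2]|.

Definition hasse_connected (p : nat) (R : prel p) : bool :=
  [forall x, forall y, connect (fun u v => covers R u v || covers R v u) x y].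

Definition poset_iso (p : nat) (R S : prel p) : bool :=
  [exists s : {perm 'I_p}, [forall x, forall y, S (s x, s y) == R (x, y)]].

Definition H (p a : nat) : nat :=
  #|equivalence_partition (@poset_iso p)
      [set R : prel p | is_porder R && (narcs R == a)]|.

Definition Hc (p a : nat) : nat :=
  #|equivalence_partition (@poset_iso p)
      [set R : prel p | [&& is_porder R, narcs R == a & hasse_connected R]]|.

Definition amax (p : nat) : nat := (p ^ 2) %/ 4.

(* A connected graph on p vertices has at least p - 1 edges, which gives (i).
   Hasse diagrams are triangle-free, so by Mantel's theorem they have at most amax p arcs,
   which gives the first half of (ii); a disconnected diagram splits into parts of sizes
   c and p - c carrying at most amax c + amax (p - c) <= amax (p - 1) arcs, which gives (iii).
   If a poset has exactly amax p arcs, the equality case of Mantel's theorem makes its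
   Hasse diagram complete bipartite.  Such a poset is a weak order with three levels
   (minimal points, maximal non-minimal points, the rest) in which x < y iff
   level x < level y, so its isomorphism class is determined by the level sizes
   (c0, c1, c2).  The extremal size vectors are c1 = 0 with {c0, c2} = {p/2 rounded down,
   p/2 rounded up}, and c1 equal to either rounding of p/2 with c0, c2 >= 1: p vectors
   for odd p, p/2 for even p. *)

From mathcomp Require Import all_boot all_fingroup zify.
Set Implicit Arguments. Unset Strict Implicit. Unset Printing Implicit Defensive.

(** * Arithmetic of [amax] *)

Lemma leq_mul_amax x y : x * y <= amax (x + y).
Proof.
rewrite /amax leq_divRL // -mulnn.
by case: (leqP x y) => [/subnK <-|/ltnW/subnK <-]; nia.
Qed.

Lemma amaxE n : amax n = n./2 * uphalf n.
Proof.
rewrite /amax uphalf_half -{1}(odd_double_half n) -addnn -mulnn.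
case: (odd n) => /=; set m := n./2.
- have -> : (1 + (m + m)) * (1 + (m + m)) = (m * (1 + m)) * 4 + 1 by nia.
  by rewrite divnMDl // divn_small // addn0.
- have -> : (0 + (m + m)) * (0 + (m + m)) = (m * (0 + m)) * 4 by nia.
  by rewrite mulnK.
Qed.

Lemma half_add_uphalf n : n./2 + uphalf n = n.
Proof. by have := odd_double_half n; rewrite uphalf_half -addnn; lia. Qed.

Lemma amax_gt0 n : 1 < n -> 0 < amax n.
Proof. by move=> n_gt1; rewrite amaxE muln_gt0 half_gt0 uphalf_gt0 n_gt1 ltnW. Qed.

Lemma leq_amaxD m n : 0 < m -> 0 < n -> amax m + amax n <= amax (m + n).-1.
Proof.
move=> m_gt0 n_gt0; have hm := half_add_uphalf m; have hn := half_add_uphalf n.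
have um : 0 < uphalf m by rewrite uphalf_gt0.
have un : 0 < uphalf n by rewrite uphalf_gt0.
have -> : (m + n).-1 = (m./2 + n./2) + (uphalf m + uphalf n).-1 by lia.
rewrite (amaxE m) (amaxE n); apply: leq_trans (leq_mul_amax _ _); nia.
Qed.

Lemma eq_mul_same_sum x y a b : x + y = a + b -> (x * y == a * b) = (x == a) || (x == b).
Proof.
move=> s; apply/eqP/orP => [e|[] /eqP exa]; last 2 first.
- have -> : y = b by lia. by rewrite exa.
- have -> : y = a by lia. by rewrite exa mulnC.
(* otherwise [(x - a) * (x - b)], which is [a * b - x * y] over the integers, is nonzero *)
case: (ltngtP x a) => xa; case: (ltngtP x b) => xb; try by [left|right].
- have : 0 < (a - x) * (b - x) by rewrite muln_gt0; lia. nia.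
- have : 0 < (a - x) * (x - b) by rewrite muln_gt0; lia. nia.
- have : 0 < (x - a) * (b - x) by rewrite muln_gt0; lia. nia.
- have : 0 < (x - a) * (x - b) by rewrite muln_gt0; lia. nia.
Qed.

(* [p./2] and [uphalf p], listed once *)
Definition halves (p : nat) : seq nat := iota p./2 (odd p).+1.

Lemma mem_halves p x : (x \in halves p) = (x == p./2) || (x == uphalf p).
Proof. by rewrite mem_iota uphalf_half; case: (odd p) => /=; lia. Qed.

Lemma halves_bounds p b : 1 < p -> b \in halves p -> 0 < b < p.
Proof. by move=> p_gt1; rewrite mem_iota; case: (odd p) (odd_double_half p) => /=; lia. Qed.

Lemma mul_eq_amax p x y : x + y = p -> (x * y == amax p) = (x \in halves p).
Proof. by move=> <-; rewrite amaxE mem_halves eq_mul_same_sum // half_add_uphalf. Qed.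

(** * Connected and triangle-free graphs *)

Section ConnectedEdges.
Variables (T : finType) (e : rel T) (r : T).
Hypothesis connected : forall v, connect (fun u w => e u w || e w u) v r.

Lemma card_edges_connected : #|T|.-1 <= #|[set x : T * T | e x.1 x.2]|.
Proof.
pose adj u w := e u w || e w u.
have dist_ex v : exists n, [exists s : n.-tuple T, path adj v s && (last v s == r)].
  have /connectP[s ps ls] := connected v.
  by exists (size s); apply/existsP; exists (in_tuple s); rewrite ps -ls eqxx.
pose d v := ex_minn (dist_ex v).
have closer v : v != r -> exists w, adj v w && (d w < d v).
  move=> vr; rewrite /d; case: ex_minnP => n /existsP[[[|w s] /= /eqP <-]].
    by rewrite (negbTE vr).
  case/andP=> /andP[vw ps] ls _; exists w; rewrite vw /=.
  case: ex_minnP => m _ /(_ (size s)); rewrite ltnS; apply; apply/existsP.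
  by exists (in_tuple s); rewrite ps ls.
(* Each [v != r] is sent to its edge towards a neighbour closer to [r]; the endpoint
   farther from [r] recovers [v]. *)
pose parent v := odflt v [pick w | adj v w && (d w < d v)].
have parentP v : v != r -> adj v (parent v) && (d (parent v) < d v).
  by move=> /closer[w hw]; rewrite /parent; case: pickP => [//|/(_ w)]; rewrite hw.
pose edge v := if e v (parent v) then (v, parent v) else (parent v, v).
have edge_inj : {in [set~ r] &, injective edge}.
  pose far x := if d x.1 < d x.2 then x.2 else x.1.
  apply: (can_in_inj (g := far)) => v; rewrite !inE => /parentP/andP[_ dv].
  by rewrite /far /edge; case: (e v _) => /=; rewrite ?dv // ltnNge ltnW.
rewrite -(cardsC1 r) -(card_in_imset edge_inj); apply/subset_leq_card/subsetP.
move=> _ /imsetP[v + ->]; rewrite !inE => /parentP/andP[+ _].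
by rewrite /edge; case/orP=> evp; [rewrite evp|case: ifP].
Qed.
End ConnectedEdges.

Section Mantel.
Variables (T : finType) (adj : rel T).
Hypothesis adj_sym : symmetric adj.
Hypothesis triangle_free : forall u v w, adj u v -> adj v w -> ~~ adj u w.

Definition edges_in (S : {set T}) :=
  [set x : T * T | [&& adj x.1 x.2, x.1 \in S & x.2 \in S]].

Definition nbhd (S : {set T}) v := [set w in S | adj v w].

Definition edges_from (S X : {set T}) := [set x in edges_in S | x.1 \in X].

Lemma card_edges_in_split (S X : {set T}) :
  #|edges_in S| = #|edges_from S X| + #|edges_from S (S :\: X)|.
Proof.
rewrite -(cardsID [set x | x.1 \in X]); congr (_ + _); apply: eq_card => -[u v].
  by rewrite !inE.
rewrite !inE /=; case: (boolP (u \in X)) => uX /=; first by rewrite andbF.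
by case: (u \in S); rewrite /= ?andbF ?andbT.
Qed.

Lemma card_edges_from (S X : {set T}) : X \subset S ->
  #|edges_from S X| = \sum_(v in X) #|nbhd S v|.
Proof.
move=> sXS; rewrite (eq_bigr (fun v => \sum_(w in nbhd S v) 1)) => [|v _]; last first.
  by rewrite sum1_card.
rewrite pair_big_dep sum1dep_card; apply: eq_card => -[u v]; rewrite !inE /=.
case uX: (u \in X); rewrite ?andbF // (subsetP sXS u uX) andbT.
by case: (adj u v) (v \in S) => [] [].
Qed.

Lemma swap_edges_from_independent (S A : {set T}) : {in A &, forall u v, ~~ adj u v} ->
  swap_pair @: edges_from S A \subset edges_from S (S :\: A).
Proof.
move=> indepA; apply/subsetP => _ /imsetP[[u v] + ->]; rewrite !inE /=.
case/andP=> /and3P[uv uS vS] uA; rewrite adj_sym uv uS vS /= andbT.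
by apply: contraTN uv => vA; apply: indepA.
Qed.

Section MaxDegreeBound.
Variables (S A : {set T}).
Hypotheses (sAS : A \subset S) (indepA : {in A &, forall u v, ~~ adj u v}).
Hypothesis deg_le : forall v, v \in S -> #|nbhd S v| <= #|A|.

Let deg_sum_le : \sum_(v in S :\: A) #|nbhd S v| <= #|S :\: A| * #|A|
                   ?= iff [forall (v | v \in S :\: A), #|nbhd S v| == #|A|].
Proof.
rewrite -sum_nat_const; apply: leqif_sum => v; rewrite inE => /andP[_ vS].
exact/leqif_eq/deg_le.
Qed.

Let card_from_A_le : #|edges_from S A| <= #|edges_from S (S :\: A)|.
Proof.
rewrite -(card_imset _ (can_inj swap_pairK)).
exact/subset_leq_card/swap_edges_from_independent.
Qed.

(* Every edge has an endpoint outside the independent set [A], and reversing the edges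
   that leave [A] embeds them into the edges that leave [S :\: A]. *)
Lemma card_edges_in_le : #|edges_in S| <= 2 * (#|S :\: A| * #|A|).
Proof.
have := deg_sum_le.1; have := card_from_A_le.
rewrite (card_edges_in_split _ A) -card_edges_from ?subsetDl //.
set a := #|edges_from S A|; set b := #|edges_from S _|; lia.
Qed.

Lemma card_edges_in_eq : #|edges_in S| = 2 * (#|S :\: A| * #|A|) ->
  forall u v, u \in S :\: A -> v \in S -> adj u v = (v \in A).
Proof.
move=> eq_edges u v uB vS; have /setDP[uS uA] := uB.
have deg_le_iff := deg_sum_le; have from_A_le := card_from_A_le.
rewrite -card_edges_from ?subsetDl // in deg_le_iff.
rewrite (card_edges_in_split _ A) in eq_edges.
have [from_A_eq from_B_eq] :
    #|edges_from S A| = #|S :\: A| * #|A| /\ #|edges_from S (S :\: A)| = #|S :\: A| * #|A|.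
  move: eq_edges from_A_le (deg_le_iff.1); set a := #|edges_from S A|.
  set b := #|edges_from S _|; set c := _ * _; lia.
have swap_eq : swap_pair @: edges_from S A = edges_from S (S :\: A).
  apply/eqP; rewrite eqEcard swap_edges_from_independent //=.
  by rewrite (card_imset _ (can_inj swap_pairK)) from_A_eq from_B_eq.
have to_A w : (u, w) \in edges_from S (S :\: A) -> w \in A.
  by rewrite -swap_eq => /imsetP[[a b] + [_ ->]]; rewrite !inE => /andP[_].
have nbhd_u : nbhd S u = A.
  apply/eqP; rewrite eqEcard; apply/andP; split.
    by apply/subsetP => w; rewrite inE => /andP[wS uw]; apply: to_A; rewrite !inE uw wS uS uA.
  have := eq_leqif deg_le_iff; rewrite from_B_eq eqxx.
  by move=> /esym/forall_inP/(_ u uB)/eqP ->.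
apply/idP/idP => [uv|]; first by apply: to_A; rewrite !inE uv vS uS uA.
by rewrite -nbhd_u inE vS.
Qed.

End MaxDegreeBound.

Lemma nbhd_independent (S : {set T}) y : {in nbhd S y &, forall u v, ~~ adj u v}.
Proof.
move=> u v; rewrite !inE => /andP[_ yu] /andP[_ yv].
by apply: (triangle_free _ yv); rewrite adj_sym.
Qed.

Lemma max_degree_nbhd (S : {set T}) x : x \in S ->
  exists2 y, y \in S & forall v, v \in S -> #|nbhd S v| <= #|nbhd S y|.
Proof. by move=> xS; case: (arg_maxnP (fun v => #|nbhd S v|) xS) => y; exists y. Qed.

Lemma subset_nbhd (S : {set T}) y : nbhd S y \subset S.
Proof. by apply/subsetP => v; rewrite inE => /andP[]. Qed.

Theorem mantel (S : {set T}) : #|edges_in S| <= 2 * amax #|S|.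
Proof.
have [->|[x xS]] := set_0Vmem S.
  suff -> : edges_in set0 = set0 by rewrite cards0.
  by apply/setP => -[u v]; rewrite !inE /= andbF.
have [y yS deg_le] := max_degree_nbhd xS.
apply: leq_trans (card_edges_in_le (subset_nbhd S y) (@nbhd_independent S y) deg_le) _.
rewrite leq_mul2l /=.
by rewrite (leq_trans (leq_mul_amax _ _)) // cardsDS ?subnK ?subset_leq_card ?subset_nbhd.
Qed.

Theorem mantel_extremal : 1 < #|T| -> #|edges_in setT| = 2 * amax #|T| ->
  exists A : {set T}, [/\ A != set0, A != setT & forall u v, adj u v = ((u \in A) != (v \in A))].
Proof.
move=> T_gt1 eq_edges; have /card_gt0P[x _] : 0 < #|T| by lia.
have [y _ deg_le] := max_degree_nbhd (in_setT x); set A := nbhd setT y.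
have le := card_edges_in_le (subset_nbhd _ y) (@nbhd_independent _ y) deg_le.
have eq_case := card_edges_in_eq (subset_nbhd _ y) (@nbhd_independent _ y) deg_le.
have card_sum : #|setT :\: A| + #|A| = #|T| by rewrite cardsDS ?subsetT // cardsT subnK ?max_card.
have card_mul : #|setT :\: A| * #|A| = amax #|T|.
  move: le; rewrite -/A eq_edges; have := leq_mul_amax #|setT :\: A| #|A|; rewrite card_sum; lia.
have : 0 < #|setT :\: A| * #|A| by rewrite card_mul amax_gt0.
rewrite muln_gt0 => /andP[B_gt0 A_gt0].
move: eq_case; rewrite -/A eq_edges card_mul => /(_ erefl) adjB.
exists A; split.
- by rewrite -card_gt0.
- by apply: contraTneq B_gt0 => ->; rewrite setDv cards0.
move=> u v; case uA: (u \in A); case vA: (v \in A) => /=.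
- exact: negbTE (nbhd_independent uA vA).
- by rewrite adj_sym adjB ?uA // ?in_setD ?vA ?in_setT.
- by rewrite adjB ?vA // ?in_setD ?uA ?in_setT.
- by rewrite adjB ?vA // ?in_setD ?uA ?in_setT.
Qed.
End Mantel.

(** * Orders whose covering graph is complete bipartite *)

Record complete_bipartite_covers (T : finType) (lt cov : rel T) (side : pred T) : Prop := {
  cbc_trans : forall x y z, lt x y -> lt y z -> lt x z;
  cbc_irr : forall x, ~~ lt x x;
  cbc_cov_lt : forall x y, cov x y -> lt x y;
  cbc_cov_min : forall x y w, cov x y -> lt x w -> lt w y -> False;
  cbc_across : forall x y, side x != side y -> cov x y || cov y x;
  cbc_sideT : exists x, side x;
  cbc_sideF : exists x, ~~ side x }.

Arguments cbc_trans {T lt cov side} _ {x y z}.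
Arguments cbc_cov_lt {T lt cov side} _ {x y}.
Arguments cbc_cov_min {T lt cov side} _ {x y w}.
Arguments cbc_across {T lt cov side} _ {x y}.

Lemma complete_bipartite_covers_dual (T : finType) (lt cov : rel T) side :
    complete_bipartite_covers lt cov side ->
  complete_bipartite_covers [rel x y | lt y x] [rel x y | cov y x] side.
Proof.
case=> tr irr cov_lt cov_min across sT sF; split => //= [x y z lxy lyz|x y|x y w cxy lxw lwy|x y].
- exact: tr lyz lxy.
- exact: cov_lt.
- exact: cov_min cxy lwy lxw.
- by rewrite orbC; apply: across.
Qed.

Definition minimalb (T : finType) (lt : rel T) x := [forall u, ~~ lt u x].

Definition maximalb (T : finType) (lt : rel T) x := minimalb [rel a b | lt b a] x.

Definition level (T : finType) (lt : rel T) x : nat :=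
  if minimalb lt x then 0 else if maximalb lt x then 2 else 1.

Lemma level_le2 (T : finType) (lt : rel T) x : level lt x <= 2.
Proof. by rewrite /level; case: ifP => //; case: ifP. Qed.

Lemma level1_inner (T : finType) (lt : rel T) x :
  level lt x = 1 -> (exists u, lt u x) /\ (exists v, lt x v).
Proof.
rewrite /level /maximalb /minimalb; case: ifP => // /negbT /forallPn[u /negPn ux].
by case: ifP => // /negbT /forallPn[v /negPn /= xv]; split; [exists u|exists v].
Qed.

Section CompleteBipartiteCovers.
Variables (T : finType) (lt cov : rel T) (side : pred T).
Hypothesis cb : complete_bipartite_covers lt cov side.

Lemma cbc_asym x y : lt x y -> lt y x -> False.
Proof. by move=> lxy lyx; have := cbc_irr cb x; rewrite (cbc_trans cb lxy lyx). Qed.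

Lemma exists_other_side x : exists y, side y != side x.
Proof.
case sx: (side x); [case: (cbc_sideF cb) => y sy | case: (cbc_sideT cb) => y sy];
  by exists y; rewrite ?(negbTE sy) ?sy.
Qed.

Lemma same_side_lt_between x y b :
  side x = side y -> lt x y -> side b != side x -> lt x b /\ lt b y.
Proof.
move=> sxy lxy sb; have sby : side b != side y by rewrite -sxy.
case/orP: (cbc_across cb sb) => [cbx|cxb]; case/orP: (cbc_across cb sby) => [cby|cyb].
- by case: (cbc_cov_min cb cby (cbc_cov_lt cb cbx) lxy).
- by case: (cbc_asym (cbc_trans cb lxy (cbc_cov_lt cb cyb)) (cbc_cov_lt cb cbx)).
- by split; apply: (cbc_cov_lt cb).
- by case: (cbc_cov_min cb cxb lxy (cbc_cov_lt cb cyb)).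
Qed.

Lemma lt_from_other_side u x : lt u x -> exists2 q, side q != side x & lt q x.
Proof.
move=> lux; have [sux|] := eqVneq (side u) (side x); last by exists u.
have [b sb] := exists_other_side u.
by exists b; [rewrite -sux | case: (same_side_lt_between sux lux sb)].
Qed.

Lemma same_side_lt_minimal x y : side x = side y -> lt x y -> minimalb lt x.
Proof.
move=> sxy lxy; apply/forallP => u; apply/negP => /lt_from_other_side[q sq lqx].
by case: (same_side_lt_between sxy lxy sq) => lxq _; apply: (cbc_asym lxq lqx).
Qed.

Lemma minimal_lt x y : minimalb lt x -> ~~ minimalb lt y -> x != y -> lt x y.
Proof.
move=> /forallP min_x; rewrite /minimalb negb_forall.
move=> /existsP[u /negPn /lt_from_other_side[q sq lqy]] nxy.
have not_above_x z : cov z x -> False by move/(cbc_cov_lt cb) => lzx; have := min_x z; rewrite lzx.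
have [sxy|sxy] := eqVneq (side x) (side y).
- rewrite -sxy in sq; case/orP: (cbc_across cb sq) => [cqx|cxq]; first by case: (not_above_x _ cqx).
  apply: (cbc_trans cb (cbc_cov_lt cb cxq) lqy).
- case/orP: (cbc_across cb sxy) => [cxy|cyx]; first apply: (cbc_cov_lt cb cxy).
  by case: (not_above_x _ cyx).
Qed.

End CompleteBipartiteCovers.

Section Levels.
Variables (T : finType) (lt cov : rel T) (side : pred T).
Hypothesis cb : complete_bipartite_covers lt cov side.
Let cb' := complete_bipartite_covers_dual cb.

Lemma no_middle_chain x y :
  ~~ minimalb lt x -> ~~ maximalb lt y -> lt x y -> False.
Proof.
move=> + + lxy; have [sxy|sxy] := eqVneq (side x) (side y).
  by rewrite (same_side_lt_minimal cb sxy lxy).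
rewrite /maximalb /minimalb !negb_forall.
move=> /existsP[u /negPn /(lt_from_other_side cb)[q sq lqx]].
move=> /existsP[v /negPn /(lt_from_other_side cb')[r sr /= lyr]].
have sqy : side q = side y by move: sq sxy; case: (side q) (side x) (side y) => [] [] [].
have sry : side r != side q by rewrite sqy.
have [_ lry] := same_side_lt_between cb sqy (cbc_trans cb lqx lxy) sry.
apply: (cbc_asym cb lry lyr).
Qed.

Lemma level_lt x y : x != y -> lt x y = (level lt x < level lt y).
Proof.
move=> nxy; have nyx : y != x by rewrite eq_sym.
have bottom_lt := @minimal_lt _ _ _ _ cb x y.
have lt_top : maximalb lt y -> ~~ maximalb lt x -> y != x -> lt x y := @minimal_lt _ _ _ _ cb' y x.
have no_middle := @no_middle_chain x y.
have not_max_x : lt x y -> ~~ maximalb lt x.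
  by move=> lxy; apply/forallPn; exists y; rewrite negbK.
have not_min_y : lt x y -> ~~ minimalb lt y.
  by move=> lxy; apply/forallPn; exists x; rewrite negbK.
move: bottom_lt lt_top no_middle not_max_x not_min_y; rewrite /level.
case: (lt x y); case: (minimalb lt x); case: (minimalb lt y);
  case: (maximalb lt x); case: (maximalb lt y) => //= b t m mx my;
  by [ have := b isT isT nxy | have := t isT isT nyx | have := m isT isT isT
     | have := mx isT | have := my isT ].
Qed.
End Levels.

(** * Hasse diagrams *)

Definition hasse_adj p (R : prel p) (u v : 'I_p) := covers R u v || covers R v u.

Lemma hasse_adj_sym p (R : prel p) : symmetric (hasse_adj R).
Proof. by move=> u v; rewrite /hasse_adj orbC. Qed.

Lemma covers_le p (R : prel p) x y : covers R x y -> R (x, y).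
Proof. by case/and3P. Qed.

Lemma covers_neq p (R : prel p) x y : covers R x y -> x != y.
Proof. by case/and3P. Qed.

Lemma narcs_connected p (R : prel p) : 0 < p -> hasse_connected R -> p.-1 <= narcs R.
Proof.
move=> p_gt0 /forallP conn; rewrite -{1}(card_ord p).
by apply: (card_edges_connected (r := Ordinal p_gt0)) => v; move/forallP: (conn v).
Qed.

Section Poset.
Variables (p : nat) (R : prel p).
Hypothesis R_porder : is_porder R.

Lemma porder_refl x : R (x, x).
Proof. by case/and3P: R_porder => /forallP. Qed.

Lemma porder_anti x y : R (x, y) -> R (y, x) -> x = y.
Proof.
case/and3P: R_porder => _ /forallP/(_ x)/forallP/(_ y)/implyP anti _ Rxy Ryx.
by apply/eqP/anti; rewrite Rxy Ryx.
Qed.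

Lemma porder_trans x y z : R (x, y) -> R (y, z) -> R (x, z).
Proof.
case/and3P: R_porder => _ _ /forallP/(_ x)/forallP/(_ y)/forallP/(_ z)/implyP trans Rxy Ryz.
by apply: trans; rewrite Rxy Ryz.
Qed.

Lemma covers_asym x y : covers R x y -> ~~ covers R y x.
Proof.
move=> cxy; apply/negP => /covers_le /(porder_anti (covers_le cxy)) exy.
by move: (covers_neq cxy); rewrite exy eqxx.
Qed.

Lemma covers_chain x y z : covers R x y -> covers R y z -> ~~ hasse_adj R x z.
Proof.
move=> cxy cyz; rewrite /hasse_adj negb_or; apply/andP; split.
  apply/negP => /and3P[_ _ /existsP[]]; exists y.
  by rewrite eq_sym (covers_neq cxy) (covers_neq cyz) (covers_le cxy) (covers_le cyz).
apply/negP => czx; have Rxz := porder_trans (covers_le cxy) (covers_le cyz).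
by move: cyz; rewrite -(porder_anti Rxz (covers_le czx)) => /covers_asym; rewrite cxy.
Qed.

Lemma hasse_triangle_free u v w : hasse_adj R u v -> hasse_adj R v w -> ~~ hasse_adj R u w.
Proof.
rewrite {1 2}/hasse_adj => /orP[cuv|cvu] /orP[cvw|cwv].
- exact: covers_chain cuv cvw.
- apply/negP; rewrite /hasse_adj => /orP[cuw|cwu].
    by move: (covers_chain cuw cwv); rewrite /hasse_adj cuv.
  by move: (covers_chain cwu cuv); rewrite /hasse_adj cwv.
- apply/negP; rewrite /hasse_adj => /orP[cuw|cwu].
    by move: (covers_chain cvu cuw); rewrite /hasse_adj cvw.
  by move: (covers_chain cvw cwu); rewrite /hasse_adj cvu.
- by rewrite hasse_adj_sym; apply: covers_chain cwv cvu.
Qed.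

Lemma card_hasse_edges : #|edges_in (hasse_adj R) setT| = 2 * narcs R.
Proof.
pose arcs := [set e : 'I_p * 'I_p | covers R e.1 e.2].
have -> : edges_in (hasse_adj R) setT = arcs :|: swap_pair @: arcs.
  apply/setP => -[x y]; rewrite !inE /= !andbT /hasse_adj.
  apply/orP/orP => [[cxy|cyx]|[cxy|/imsetP[[a b] + [-> ->]]]].
  - by left.
  - by right; apply/imsetP; exists (y, x); rewrite ?inE.
  - by left.
  - by rewrite inE; right.
rewrite cardsU (card_imset _ (can_inj swap_pairK)).
suff -> : arcs :&: swap_pair @: arcs = set0 by rewrite cards0 subn0 addnn -mul2n.
apply/setP => -[x y]; rewrite !inE /=; apply/negP => /andP[cxy /imsetP[[a b] + [ex ey]]].
by rewrite inE /= -ex -ey => cyx; move: (covers_asym cxy); rewrite cyx.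
Qed.

Lemma narcs_le_amax : narcs R <= amax p.
Proof.
have := mantel (@hasse_adj_sym p R) hasse_triangle_free setT.
by rewrite card_hasse_edges cardsT card_ord leq_pmul2l.
Qed.

Lemma narcs_disconnected : ~~ hasse_connected R -> narcs R <= amax p.-1.
Proof.
rewrite negb_forall => /existsP[x]; rewrite negb_forall => /existsP[y not_xy].
pose C := [set v | connect (hasse_adj R) x v].
have adj_C u v : hasse_adj R u v -> connect (hasse_adj R) x u = connect (hasse_adj R) x v.
  move=> uv; apply/idP/idP => xc; apply: connect_trans xc (connect1 _) => //.
  by rewrite hasse_adj_sym.
pose E := edges_in (hasse_adj R).
have E_split : E setT = E C :|: E (~: C).
  apply/setP => -[u v]; rewrite !inE /=.
  by case uv: (hasse_adj R u v) => //=; rewrite (adj_C _ _ uv); case: connect.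
have E_disj : E C :&: E (~: C) = set0.
  by apply/setP => -[u v]; rewrite !inE /=; case: connect; rewrite ?andbF.
have card_E : 2 * narcs R = #|E C| + #|E (~: C)|.
  by rewrite -card_hasse_edges -/E E_split cardsU E_disj cards0 subn0.
have mantel_C := mantel (@hasse_adj_sym p R) hasse_triangle_free C.
have mantel_D := mantel (@hasse_adj_sym p R) hasse_triangle_free (~: C).
have C_gt0 : 0 < #|C| by apply/card_gt0P; exists x; rewrite inE connect0.
have D_gt0 : 0 < #|~: C| by apply/card_gt0P; exists y; rewrite !inE.
move: mantel_C mantel_D; rewrite -/E; have := leq_amaxD C_gt0 D_gt0.
rewrite cardsC card_ord; lia.
Qed.

End Poset.

(** * Weak orders with three levels *)

Definition strict p (R : prel p) : rel 'I_p := fun x y => R (x, y) && (x != y).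

Definition weak_order p (L : 'I_p -> nat) : prel p := [ffun e => (e.1 == e.2) || (L e.1 < L e.2)].

Definition level_set p (L : 'I_p -> nat) a := [set x | L x == a].

Definition weak_order_arcs c0 c1 c2 := if c1 == 0 then c0 * c2 else (c0 + c2) * c1.

Section WeakOrder.
Variables (p : nat) (L : 'I_p -> nat).

Lemma strict_weak_order x y : strict (weak_order L) x y = (L x < L y).
Proof. by rewrite /strict ffunE /=; case: eqVneq => [->|]; rewrite ?ltnn ?andbT. Qed.

Lemma weak_order_porder : is_porder (weak_order L).
Proof.
apply/and3P; split; apply/forallP => x; rewrite ?ffunE ?eqxx //; apply/forallP => y.
  apply/implyP; rewrite !ffunE /=; case: eqVneq => //= _ /andP[]; lia.
apply/forallP => z; apply/implyP; rewrite !ffunE /=.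
case: eqVneq => [->|_] //=; case: eqVneq => [->|_] /=; first by case/andP=> ->; rewrite orbT.
case: eqVneq => //= _ /andP[]; lia.
Qed.

Lemma covers_weak_order x y :
  covers (weak_order L) x y = (L x < L y) && [forall w, ~~ (L x < L w < L y)].
Proof.
rewrite /covers ffunE /=; case: eqVneq => [->|xy] /=; first by rewrite ltnn.
congr (_ && _); rewrite negb_exists; apply: eq_forallb => w; rewrite !ffunE /=.
case: (eqVneq w x) => [->|wx]; first by rewrite ltnn.
by case: (eqVneq w y) => [->|wy]; rewrite ?ltnn ?andbF.
Qed.

Hypothesis L_le2 : forall x, L x <= 2.

Lemma card_level_sets : #|level_set L 0| + #|level_set L 1| + #|level_set L 2| = p.
Proof.
rewrite -addnA -[RHS](card_ord p) -(cardsC (level_set L 0)).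
rewrite -(cardsID (level_set L 1) (~: level_set L 0)); congr (_ + (_ + _)); apply: eq_card => x;
  by rewrite !inE; have := L_le2 x; case: (L x) => [|[|[|]]].
Qed.

Lemma narcs_weak_order :
  narcs (weak_order L) = weak_order_arcs #|level_set L 0| #|level_set L 1| #|level_set L 2|.
Proof.
rewrite /narcs /weak_order_arcs cards_eq0; case: (set_0Vmem (level_set L 1)) => [L1_0|[w1]].
  have no1 w : L w != 1.
    by apply/negP => /eqP Lw; have := in_set0 w; rewrite -L1_0 inE Lw.
  rewrite L1_0 eqxx -cardsX; apply: eq_card => -[x y]; rewrite !inE /= covers_weak_order.
  move: (L_le2 x) (L_le2 y) (no1 x) (no1 y).
  case: (L x) => [|[|[|//]]]; case: (L y) => [|[|[|//]]] //= _ _ _ _.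
  by apply/forallP => w; move: (L_le2 w) (no1 w); lia.
rewrite inE => /eqP L1; have -> : (level_set L 1 == set0) = false.
  by apply/negbTE/set0Pn; exists w1; rewrite inE L1.
rewrite mulnDl [#|level_set L 2| * _]mulnC -!cardsX -cardsUI.
have -> : setX (level_set L 0) (level_set L 1) :&: setX (level_set L 1) (level_set L 2) = set0.
  by apply/setP => -[x y]; rewrite !inE /=; case: (L x) => [|[|]] //=; rewrite andbF.
rewrite cards0 addn0; apply: eq_card => -[x y]; rewrite !inE /= covers_weak_order.
move: (L_le2 x) (L_le2 y); case: (L x) => [|[|[|//]]]; case: (L y) => [|[|[|//]]] //= _ _.
- by apply/forallP => w; lia.
- by apply/negP => /forallP/(_ w1); rewrite L1.
- by apply/forallP => w; lia.
Qed.

Lemma level_weak_order :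
  (exists x, L x = 0) -> (exists x, L x = 2) -> level (strict (weak_order L)) =1 L.
Proof.
move=> [x0 L0] [x2 L2] x.
have min_x : minimalb (strict (weak_order L)) x = (L x == 0).
  apply/forallP/eqP => [/(_ x0)|Lx u]; rewrite strict_weak_order ?Lx //; lia.
have max_x : maximalb (strict (weak_order L)) x = (L x == 2).
  apply/forallP/eqP => [/(_ x2)|Lx u] /=; rewrite strict_weak_order ?Lx.
    by have := L_le2 x; lia.
  by have := L_le2 u; lia.
by rewrite /level min_x max_x; have := L_le2 x; case: (L x) => [|[|[|]]].
Qed.

End WeakOrder.

Lemma perm_of_fibres (T : finType) (Y : eqType) (f g : T -> Y) :
    (forall y, #|[set x | f x == y]| = #|[set x | g x == y]|) ->
  exists s : {perm T}, forall x, g (s x) = f x.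
Proof.
move=> same_card.
(* [s] sends the [i]-th point of each [f]-fibre to the [i]-th point of the [g]-fibre
   over the same value. *)
pose fib (h : T -> Y) y := enum [set x | h x == y].
pose s x := nth x (fib g (f x)) (index x (fib f (f x))).
have x_fib x : x \in fib f (f x) by rewrite mem_enum inE.
have idx_lt x : index x (fib f (f x)) < size (fib g (f x)).
  by rewrite -cardE -same_card cardE index_mem.
have g_s x : g (s x) = f x by apply/eqP; have := mem_nth x (idx_lt x); rewrite mem_enum inE.
have s_inj : injective s.
  move=> x y sxy; have fxy : f x = f y by rewrite -g_s sxy g_s.
  have := idx_lt x; rewrite fxy => ltx; have lty := idx_lt y.
  move: sxy; rewrite /s fxy (set_nth_default y x ltx) => /eqP.
  rewrite (nth_uniq y ltx lty (enum_uniq _)) => /eqP.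
  have x_fib_y : x \in fib f (f y) by rewrite -fxy.
  exact: (index_inj x x_fib_y (x_fib y)).
by exists (perm s_inj) => x; rewrite permE.
Qed.

Lemma minimalb_perm (T : finType) (lt1 lt2 : rel T) (s : {perm T}) :
  (forall x y, lt2 (s x) (s y) = lt1 x y) -> forall x, minimalb lt2 (s x) = minimalb lt1 x.
Proof.
move=> lt_s x; apply/forallP/forallP => [min2 u|min1 u]; first by rewrite -lt_s.
by rewrite -(permKV s u) lt_s.
Qed.

Lemma level_perm (T : finType) (lt1 lt2 : rel T) (s : {perm T}) :
  (forall x y, lt2 (s x) (s y) = lt1 x y) -> forall x, level lt2 (s x) = level lt1 x.
Proof.
move=> lt_s x; rewrite /level /maximalb (minimalb_perm lt_s).
by rewrite (@minimalb_perm _ [rel a b | lt1 b a] [rel a b | lt2 b a]) // => a b /=.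
Qed.

Lemma card_level_sets_iso p (R S : prel p) : poset_iso R S ->
  forall a, #|level_set (level (strict R)) a| = #|level_set (level (strict S)) a|.
Proof.
case/existsP => s /forallP iso a.
have lt_s x y : strict S (s x) (s y) = strict R x y.
  by move/forallP: (iso x) => /(_ y)/eqP; rewrite /strict (inj_eq perm_inj) => ->.
rewrite -(card_preimset (level_set (level (strict S)) a) (@perm_inj _ s)).
by apply: eq_card => x; rewrite !inE (level_perm lt_s).
Qed.

Lemma weak_order_iso p (L1 L2 : 'I_p -> nat) :
  (forall a, #|level_set L1 a| = #|level_set L2 a|) -> poset_iso (weak_order L1) (weak_order L2).
Proof.
move=> /perm_of_fibres[s L_s]; apply/existsP; exists s.
by apply/forallP => x; apply/forallP => y; rewrite !ffunE /= (inj_eq perm_inj) !L_s.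
Qed.

(** * Posets with [amax p] arcs *)

Definition extremal_profile p c0 c1 :=
  [&& 0 < c0, c0 + c1 < p & weak_order_arcs c0 c1 (p - c0 - c1) == amax p].

(* [(b, 0)]: [b] minimal points below [p - b] maximal ones; [(c0, b)]: [c0] minimal
   points, then [b] middle points, then the remaining maximal ones. *)
Definition extremal_profiles p : seq (nat * nat) :=
  [seq (b, 0) | b <- halves p] ++ [seq (c0, b) | b <- halves p, c0 <- iota 1 (p - b).-1].

Lemma mem_extremal_profiles p c0 c1 :
  1 < p -> ((c0, c1) \in extremal_profiles p) = extremal_profile p c0 c1.
Proof.
move=> p_gt1; rewrite /extremal_profile /weak_order_arcs mem_cat.
case: (eqVneq c1 0) => [->|c1_neq0]; rewrite ?eqxx ?(negbTE c1_neq0).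
- have -> : (c0, 0) \in [seq (c0, b) | b <- halves p, c0 <- iota 1 (p - b).-1] = false.
    by apply/negP => /allpairsPdep[b [c [/(halves_bounds p_gt1) + _ [_ e]]]]; rewrite -e.
  have -> : ((c0, 0) \in [seq (b, 0) | b <- halves p]) = (c0 \in halves p).
    by apply/mapP/idP => [[b hb [->]] // | h]; exists c0.
  rewrite orbF addn0 subn0; apply/idP/and3P => [c0_half|[c0_gt0 c0_lt /eqP e]].
    have := halves_bounds p_gt1 c0_half; split; [lia|lia|].
    by rewrite (mul_eq_amax (x := c0) (y := p - c0)) //; lia.
  by rewrite -(mul_eq_amax (y := p - c0)) ?e //; lia.
have -> : (c0, c1) \in [seq (b, 0) | b <- halves p] = false.
  by apply/negP => /mapP[b _ [_ e]]; move: c1_neq0; rewrite e.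
apply/allpairsPdep/and3P => [[b [c [b_half + [-> ->]]]]|[c0_gt0 c0_lt /eqP e]].
  rewrite mem_iota => c_bounds; have := halves_bounds p_gt1 b_half; split; [lia|lia|].
  have -> : c + (p - c - b) = p - b by lia.
  by rewrite mulnC (mul_eq_amax (x := b) (y := p - b)) //; lia.
exists c1, c0; rewrite mem_iota; split; [|lia|by []].
move: e; have -> : c0 + (p - c0 - c1) = p - c1 by lia.
by rewrite mulnC => /eqP; rewrite mul_eq_amax //; lia.
Qed.

Lemma uniq_extremal_profiles p : 1 < p -> uniq (extremal_profiles p).
Proof.
move=> p_gt1; rewrite cat_uniq map_inj_uniq ?iota_uniq ?andTb; last by move=> b b' [].
apply/andP; split.
- apply/hasPn => _ /allpairsPdep[b [c [/(halves_bounds p_gt1) hb _ ->]]].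
  by apply/mapP => -[b' _ [_ e]]; move: hb; rewrite e.
- apply: allpairs_uniq_dep => [|b _|]; rewrite ?iota_uniq //.
  by move=> [b c] [b' c'] _ _ [-> ->].
Qed.

Lemma size_extremal_profiles p : 1 < p -> size (extremal_profiles p) = if odd p then p else p./2.
Proof.
move=> p_gt1; rewrite size_cat size_map size_allpairs_dep /halves.
have := odd_double_half p; case: (odd p) => /= hp; rewrite !size_iota /=; lia.
Qed.

Section Extremal.
Variables (p : nat) (R : prel p).
Hypotheses (R_porder : is_porder R) (p_gt1 : 1 < p) (R_extremal : narcs R = amax p).

Lemma extremal_complete_bipartite :
  exists A : {set 'I_p}, complete_bipartite_covers (strict R) (covers R) (mem A).
Proof.
have T_gt1 : 1 < #|'I_p| by rewrite card_ord.
have E_max : #|edges_in (hasse_adj R) setT| = 2 * amax #|'I_p|.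
  by rewrite card_hasse_edges // R_extremal card_ord.
have [A [A_n0 A_nT adjA]] :=
  mantel_extremal (@hasse_adj_sym p R) (hasse_triangle_free R_porder) T_gt1 E_max.
exists A; split.
- move=> x y z /andP[Rxy nxy] /andP[Ryz nyz]; rewrite /strict (porder_trans R_porder Rxy Ryz).
  by apply: contraNneq nxy => exz; apply/eqP/(porder_anti R_porder Rxy); rewrite exz.
- by move=> x; rewrite /strict eqxx andbF.
- by move=> x y cxy; rewrite /strict (covers_le cxy) (covers_neq cxy).
- move=> x y w /and3P[_ _ /existsP no_mid] /andP[Rxw nxw] /andP[Rwy nwy].
  by apply: no_mid; exists w; rewrite Rxw Rwy eq_sym nxw nwy.
- by move=> x y side_xy; have := adjA x y; rewrite side_xy.
- by case/set0Pn: A_n0 => a aA; exists a.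
- by move: A_nT; rewrite -properT => /properP[_ [b _ bA]]; exists b.
Qed.

Lemma extremal_weak_order : R = weak_order (level (strict R)).
Proof.
apply/ffunP => -[x y]; rewrite ffunE /=; case: eqVneq => [->|nxy] /=.
  exact: porder_refl.
have [A cb] := extremal_complete_bipartite.
by rewrite -(level_lt cb nxy) /strict nxy andbT.
Qed.

Lemma extremal_profile_levels :
  extremal_profile p #|level_set (level (strict R)) 0| #|level_set (level (strict R)) 1|.
Proof.
set L := level (strict R); have L_le2 x : L x <= 2 := level_le2 _ x.
have strict_L u v : strict R u v = (L u < L v) by rewrite {1}extremal_weak_order strict_weak_order.
have arcs_L := narcs_weak_order L_le2; rewrite -extremal_weak_order R_extremal in arcs_L.
have card_L := card_level_sets L_le2.
set c0 := #|level_set L 0| in arcs_L card_L *; set c1 := #|level_set L 1| in arcs_L card_L *.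
set c2 := #|level_set L 2| in arcs_L card_L.
have [c0_gt0 c2_gt0] : 0 < c0 /\ 0 < c2.
  case: (eqVneq c1 0) => [c1_0|].
    by move: (amax_gt0 p_gt1); rewrite arcs_L /weak_order_arcs c1_0 muln_gt0 => /andP.
  rewrite -lt0n => /card_gt0P[x]; rewrite inE => /eqP Lx.
  have [[u]] := level1_inner Lx; rewrite strict_L Lx => Lu [v]; rewrite strict_L Lx => Lv.
  by split; apply/card_gt0P; [exists u | exists v]; rewrite inE; apply/eqP; have := L_le2 v; lia.
rewrite /extremal_profile c0_gt0 arcs_L; have -> : p - c0 - c1 = c2 by lia.
by rewrite eqxx andbT; lia.
Qed.

End Extremal.

Lemma card_equivalence_partition_invariant (T : finType) (Y : eqType) (r : rel T)
    (D : {set T}) (f : T -> Y) (s : seq Y) :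
  {in D &, forall x y, r x y = (f x == f y)} -> uniq s ->
  (forall y, reflect (exists2 x, x \in D & f x = y) (y \in s)) ->
  #|equivalence_partition r D| = size s.
Proof.
move=> rE s_uniq memsP.
pose fibre y := [set x in D | f x == y].
have -> : equivalence_partition r D = [set:: map fibre s].
  apply/setP => B; rewrite inE; apply/imsetP/mapP => [[x xD ->]|[y /memsP[x xD <-] ->]].
  - exists (f x); first by apply/memsP; exists x.
    by apply/setP => z; rewrite !inE; case zD: (z \in D); rewrite //= rE // eq_sym.
  - exists x => //; apply/setP => z; rewrite !inE; case zD: (z \in D); rewrite //= rE // eq_sym.
rewrite cardsE -(size_map fibre); apply/card_uniqP; rewrite map_inj_in_uniq //.
move=> y y' /memsP[x xD <-] _ /setP/(_ x).
by rewrite !inE xD eqxx => /esym/eqP.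
Qed.

Definition profile p (R : prel p) : nat * nat :=
  (#|level_set (level (strict R)) 0|, #|level_set (level (strict R)) 1|).

Lemma eq_card_level_sets_profile p (R S : prel p) : profile R = profile S ->
  forall a, #|level_set (level (strict R)) a| = #|level_set (level (strict S)) a|.
Proof.
move=> [e0 e1] [|[|[|a]]] //.
  have sum_R := card_level_sets (level_le2 (strict R)).
  have sum_S := card_level_sets (level_le2 (strict S)).
  by apply: (@addnI ((profile S).1 + (profile S).2)); rewrite /= sum_S -e0 -e1 sum_R.
have empty (L : 'I_p -> nat) : (forall x, L x <= 2) -> level_set L a.+3 = set0.
  by move=> L_le2; apply/setP => x; rewrite !inE; have := L_le2 x; case: eqP => // ->.
by rewrite !empty //; apply: level_le2.
Qed.

Definition block_levels p c0 c1 (x : 'I_p) : nat := (c0 <= x) + (c0 + c1 <= x).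

Lemma card_ord_lt p c : c <= p -> #|[set x : 'I_p | x < c]| = c.
Proof.
move=> le_cp; have widen_inj : injective (widen_ord le_cp) by move=> a b /(congr1 val) /= /val_inj.
rewrite -[RHS](card_ord c) -(card_imset _ widen_inj).
apply: eq_card => x; rewrite inE; apply/idP/imsetP => [x_lt|[y _ ->]]; last exact: (ltn_ord y).
by exists (Ordinal x_lt) => //; apply: val_inj.
Qed.

Lemma card_block_levels p c0 c1 : c0 + c1 <= p ->
  #|level_set (@block_levels p c0 c1) 0| = c0 /\ #|level_set (@block_levels p c0 c1) 1| = c1.
Proof.
move=> le_p; have le_c0 : c0 <= c0 + c1 := leq_addr _ _.
have -> : level_set (@block_levels p c0 c1) 0 = [set x : 'I_p | x < c0].
  by apply/setP => x; rewrite !inE /block_levels; case: leqP; case: leqP => //; lia.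
have -> : level_set (@block_levels p c0 c1) 1 =
    [set x : 'I_p | x < c0 + c1] :\: [set x : 'I_p | x < c0].
  by apply/setP => x; rewrite !inE /block_levels; case: leqP; case: leqP => //; lia.
rewrite cardsDS ?card_ord_lt //; [lia|lia|].
by apply/subsetP => x; rewrite !inE => /leq_trans; apply.
Qed.

Lemma extremal_profile_realized p c0 c1 : extremal_profile p c0 c1 ->
  let R := weak_order (@block_levels p c0 c1) in
  [/\ is_porder R, narcs R = amax p & profile R = (c0, c1)].
Proof.
case/and3P=> c0_gt0 lt_p /eqP arcs_eq R; set L := @block_levels p c0 c1.
have L_le2 x : L x <= 2 by rewrite /L /block_levels; case: (c0 <= x); case: (c0 + c1 <= x).
have [card0 card1] := card_block_levels (ltnW lt_p).
have card2 : #|level_set L 2| = p - c0 - c1.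
  by have := card_level_sets L_le2; rewrite -/L card0 card1; lia.
have level_L : level (strict R) =1 L.
  have first_lt : 0 < p by lia.
  have last_lt : p.-1 < p by lia.
  apply: level_weak_order => //; [exists (Ordinal first_lt)|exists (Ordinal last_lt)];
    rewrite /L /block_levels /=; lia.
split; first exact: weak_order_porder.
  by rewrite narcs_weak_order // card0 card1 card2.
have level_set_R a : level_set (level (strict R)) a = level_set L a.
  by apply/setP => x; rewrite !inE level_L.
by rewrite /profile !level_set_R card0 card1.
Qed.

Lemma H_amax_gt1 p : 1 < p -> H p (amax p) = if odd p then p else p./2.
Proof.
move=> p_gt1; rewrite /H -size_extremal_profiles //.
apply: (card_equivalence_partition_invariant (f := @profile p)) (uniq_extremal_profiles p_gt1) _
  => [R S|[c0 c1]].
  rewrite !inE => /andP[R_po /eqP R_ex] /andP[S_po /eqP S_ex].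
  apply/idP/eqP => [iso_RS|same_profile].
    by rewrite /profile !(card_level_sets_iso iso_RS).
  rewrite (extremal_weak_order R_po p_gt1 R_ex) (extremal_weak_order S_po p_gt1 S_ex).
  exact/weak_order_iso/eq_card_level_sets_profile.
rewrite mem_extremal_profiles //; apply: (iffP idP) => [|[R]].
  case/extremal_profile_realized=> R_po R_ex R_prof.
  by exists (weak_order (@block_levels p c0 c1)); rewrite ?inE ?R_po ?R_ex ?eqxx.
by rewrite inE => /andP[R_po /eqP R_ex] [<- <-]; apply: extremal_profile_levels.
Qed.

Lemma H_amax1 : H 1 (amax 1) = 1.
Proof.
rewrite /H; apply: (card_equivalence_partition_invariant (f := fun _ => tt) (s := [:: tt])) => //.
  move=> R S; rewrite !inE => /andP[R_po _] /andP[S_po _]; apply/existsP; exists 1%g.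
  by apply/forallP => x; apply/forallP => y; rewrite !perm1 (ord1 x) (ord1 y) !porder_refl.
case=> /=; rewrite inE; apply: (iffP idP) => // _; exists (weak_order (fun _ => 0)) => //.
rewrite inE weak_order_porder /narcs (_ : amax 1 = 0) // cards_eq0; apply/eqP/setP => -[x y].
by rewrite !inE (ord1 x) (ord1 y) /covers eqxx.
Qed.

Lemma H_amax p : 0 < p -> H p (amax p) = if odd p then p else p./2.
Proof. by case: p => [|[|p]] // _; [exact: H_amax1 | exact: H_amax_gt1]. Qed.

Lemma Hc_eq0 p a : 0 < p -> a < p.-1 -> Hc p a = 0.
Proof.
move=> p_gt0 lt_a; rewrite /Hc /equivalence_partition.
suff -> : [set R : prel p | [&& is_porder R, narcs R == a & hasse_connected R]] = set0.
  by rewrite imset0 cards0.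
apply/setP => R; rewrite !inE; apply/negP => /and3P[_ /eqP arcs_a conn].
by have := narcs_connected p_gt0 conn; lia.
Qed.

Lemma H_eq0 p a : amax p < a -> H p a = 0.
Proof.
move=> lt_a; rewrite /H /equivalence_partition.
suff -> : [set R : prel p | is_porder R && (narcs R == a)] = set0 by rewrite imset0 cards0.
apply/setP => R; rewrite !inE; apply/negP => /andP[R_po /eqP arcs_a].
by have := narcs_le_amax R_po; lia.
Qed.

Lemma H_eq_Hc p a : amax p.-1 < a -> H p a = Hc p a.
Proof.
move=> lt_a; rewrite /H /Hc; congr #|equivalence_partition _ _|; apply/setP => R; rewrite !inE.
case R_po: (is_porder R); case: eqP => //= arcs_a; apply: esym; apply: contraTT lt_a => disconn.
by rewrite -leqNgt -arcs_a narcs_disconnected.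
Qed.

Theorem lemma2 (p : nat) (hp : 1 <= p) :
  (forall a : nat, a < p - 1 -> Hc p a = 0) /\
  (forall a : nat, amax p < a -> H p a = 0) /\
  H p (amax p) = (if odd p then p else p %/ 2) /\
  (forall a : nat, amax (p - 1) < a <= amax p -> H p a = Hc p a).
Proof.
rewrite subn1 divn2; split; first by move=> a; apply: Hc_eq0.
split; first by move=> a; apply: H_eq0.
split; first exact: H_amax.
by move=> a /andP[lt_a _]; apply: H_eq_Hc.
Qed.
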